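(* Let a group $G$ act freely on a connected weighted simplicial complex $\Omega$ on $[n]$, let $\mathcal H_0,\ldots,\mathcal H_n$ be Hilbert spaces with $\mathcal H_i=\mathcal H_j$ whenever $i,j$ lie in the same $G$-orbit, and $\mathcal V=\mathcal B(\mathcal H_0)\otimes\cdots\otimes\mathcal B(\mathcal H_n)$ (algebraic tensor product). Then every separable $G$-invariant $\sigma\in\mathcal V$ satisfies ${\rm sep\text{-}rank}_{(\Omega,G)}(\sigma)<\infty$.
   Context: $[n]=\{0,\ldots,n\}$. A weighted simplicial complex (wsc) on $[n]$ is a function $\Omega\colon\mathcal P([n])\to\mathbb N=\{0,1,\ldots\}$ such that $S_1\subseteq S_2$ implies $\Omega(S_1)\mid\Omega(S_2)$; simplices are sets with $\Omega(S)\neq0$, every singleton is assumed to be a simplex, facets are inclusion-maximal simplices, $\mathcal F$ is the set of facets. $\widetilde{\mathcal F}$ is the multiset containing each facet $F$ exactly $\Omega(F)$ times, with collapse map $c\colon\widetilde{\mathcal F}\to\mathcal F$; $\widetilde{\mathcal F}_i$ consists of the copies of facets containing $i$. $\Omega$ is connected if any two vertices are joined by a chain of vertices in which consecutive ones lie in a common facet. A group action of $G$ on $\Omega$ is an action of $G$ on $[n]$ with $\Omega(gS)=\Omega(S)$, together with an action of $G$ on $\widetilde{\mathcal F}$ such that $c(gx)=gc(x)$; it is free if the action on $\widetilde{\mathcal F}$ is free. $G$ acts on $\mathcal V$ by permuting tensor factors according to its action on $[n]$. $\mathcal B(\mathcal H)$ is the space of bounded operators. $\sigma$ is separable if $\sigma=\sum_{j=1}^r\sigma^{[0]}_j\otimes\cdots\otimes\sigma^{[n]}_j$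 with all $\sigma^{[i]}_j$ positive semidefinite. For $\beta\colon\widetilde{\mathcal F}_i\to\mathcal I$, ${}^g\beta\colon\widetilde{\mathcal F}_{gi}\to\mathcal I$ is $x\mapsto\beta(g^{-1}x)$; $\alpha_{\mid i}$ is restriction to $\widetilde{\mathcal F}_i$. An $(\Omega,G)$-decomposition of $\sigma$ is a finite set $\mathcal I$ and local operators $\sigma^{[i]}_\beta\in\mathcal B(\mathcal H_i)$ ($\beta\in\mathcal I^{\widetilde{\mathcal F}_i}$) with $\sigma=\sum_{\alpha\in\mathcal I^{\widetilde{\mathcal F}}}\sigma^{[0]}_{\alpha_{\mid0}}\otimes\cdots\otimes\sigma^{[n]}_{\alpha_{\mid n}}$ and $\sigma^{[i]}_\beta=\sigma^{[gi]}_{{}^g\beta}$ for all $i,g,\beta$. It is separable if all $\sigma^{[i]}_\beta$ are positive semidefinite; ${\rm sep\text{-}rank}_{(\Omega,G)}(\sigma)$ is the minimal $|\mathcal I|$ over separable $(\Omega,G)$-decompositions ($\infty$ if none). *)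

From HB Require Import structures.
From mathcomp Require Import all_boot all_order all_algebra all_fingroup.
From mathcomp Require Import reals.
From mathcomp Require Import complex.
Set Implicit Arguments.
Unset Strict Implicit.
Unset Printing Implicit Defensive.
Import Order.TTheory GRing.Theory Num.Theory.
Local Open Scope ring_scope.

Record hilbert (R : realType) := Hilbert {
  hsort :> lmodType R[i];
  hip : hsort -> hsort -> R[i];
  hip_linr : forall x (a : R[i]) y z, hip x (a *: y + z) = a * hip x y + hip x z;
  hip_conj : forall x y, hip y x = (hip x y)^*;
  hip_ge0 : forall x, 0 <= hip x x;
  hip_eq0 : forall x, hip x x = 0 -> x = 0;
  hip_complete : forall u : nat -> hsort,
    (forall e : R[i], 0 < e -> exists N, forall m k, (N <= m)%N -> (N <= k)%N ->
        `|hip (u m - u k) (u m - u k)| < e) ->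
    exists l : hsort, forall e : R[i], 0 < e -> exists N, forall m, (N <= m)%N ->
        `|hip (u m - l) (u m - l)| < e
}.

Definition is_bop (R : realType) (H : hilbert R) (A : H -> H) : Prop :=
  (forall (a : R[i]) x y, A (a *: x + y) = a *: A x + A y) /\
  exists M : R[i], forall x, `|hip (A x) (A x)| <= M * `|hip x x|.

Definition is_psd (R : realType) (H : hilbert R) (A : H -> H) : Prop :=
  forall x, 0 <= hip x (A x).

Definition castH (R : realType) (A B : hilbert R) (e : A = B) (x : A) : B :=
  match e in _ = B' return hsort B' with erefl => x end.

Definition castop (R : realType) (A B : hilbert R) (e : A = B) (f : A -> A) : B -> B :=
  fun x => castH e (f (castH (esym e) x)).

(* Elements of V = B(H_0) (x) ... (x) B(H_n) (algebraic tensor product) are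
   represented through the injective linear embedding
     a_0 (x) ... (x) a_n  |->  ((x_i),(y_i)) |-> prod_i <x_i, a_i y_i>
   into functions on prod_i H_i x prod_i H_i.  *)
Definition elem_tensor (R : realType) (n : nat) (H : 'I_n.+1 -> hilbert R)
  (a : forall i, H i -> H i) (x y : forall i, H i) : R[i] :=
  \prod_(i < n.+1) hip (x i) (a i (y i)).

(* Weighted simplicial complexes on [n] = {0,...,n} = 'I_n.+1           *)

Definition is_wsc (n : nat) (Om : {set 'I_n.+1} -> nat) : Prop :=
  (forall S1 S2 : {set 'I_n.+1}, S1 \subset S2 -> (Om S1 %| Om S2)%N) /\
  (forall i : 'I_n.+1, Om [set i] != 0%N).

Definition simplex (n : nat) (Om : {set 'I_n.+1} -> nat) (S : {set 'I_n.+1}) : bool :=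
  Om S != 0%N.

Definition facet (n : nat) (Om : {set 'I_n.+1} -> nat) (S : {set 'I_n.+1}) : bool :=
  simplex Om S && [forall T : {set 'I_n.+1}, (S \proper T) ==> ~~ simplex Om T].

Definition wsc_adj (n : nat) (Om : {set 'I_n.+1} -> nat) : rel 'I_n.+1 :=
  fun i j => [exists F : {set 'I_n.+1}, [&& facet Om F, i \in F & j \in F]].

Definition wsc_connected (n : nat) (Om : {set 'I_n.+1} -> nat) : Prop :=
  forall i j : 'I_n.+1, connect (wsc_adj Om) i j.

(* the multiset F~ : each facet F appears Om F times, as pairs (F, k), k < Om F *)
Definition Ftil (n : nat) (Om : {set 'I_n.+1} -> nat) : finType :=
  {x : {F : {set 'I_n.+1} & 'I_(Om F)} | facet Om (tag x)}.

Definition collapse (n : nat) (Om : {set 'I_n.+1} -> nat) (x : Ftil Om) : {set 'I_n.+1} :=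
  tag (val x).

Definition Ftil_at (n : nat) (Om : {set 'I_n.+1} -> nat) (i : 'I_n.+1) : finType :=
  {x : Ftil Om | i \in collapse x}.

Definition restr (n : nat) (Om : {set 'I_n.+1} -> nat) (D : nat)
  (al : {ffun Ftil Om -> 'I_D}) (i : 'I_n.+1) : {ffun Ftil_at Om i -> 'I_D} :=
  [ffun y => al (val y)].

From HB Require Import structures.
From mathcomp Require Import all_boot all_order all_algebra all_fingroup.
From mathcomp Require Import reals complex.
From Stdlib Require Import ProofIrrelevance.
Import Order.TTheory GRing.Theory Num.Theory.
Local Open Scope ring_scope.
Set Implicit Arguments.
Unset Strict Implicit.
Unset Printing Implicit Defensive.

(* By G-invariance, sigma = |G|^-1 sum_g g.sigma, and translating the separable
   decomposition sigma = sum_j (x)_i a_j^[i] by each g gives a decomposition of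
   g.sigma; its terms are indexed by p = (j, g).  As G acts freely on the facet
   copies, every copy is x = x0.phi(x) for a unique phi(x) in G, where x0 is a
   fixed representative of its orbit.  The labelling alpha_p(x) = (j, g phi(x)^-1)
   satisfies alpha_p(x.h) = alpha_(j, g h^-1)(x).  At vertex i, the local operator
   of a label beta is |G|^(-1/(n+1)) times the i-th factor of the term p if beta
   is the restriction of alpha_p, and 0 otherwise.  By connectedness a labelling
   that restricts at every vertex to some alpha_p is itself an alpha_p, so exactly
   the labellings alpha_p contribute to the sum, and the translation rule for
   alpha_p makes the local operators equivariant. *)

Section HilbertOperators.
Variable R : realType.
Implicit Types A B C : hilbert R.

Lemma hip0r A (x : A) : hip x 0 = 0.
Proof.
have := hip_linr x 1 0 0; rewrite scale1r addr0 mul1r => h.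
by apply: (@addrI _ (hip x 0)); rewrite addr0 -h.
Qed.

Lemma hipZr A (x y : A) a : hip x (a *: y) = a * hip x y.
Proof. by rewrite -[a *: y]addr0 hip_linr hip0r addr0. Qed.

Lemma hipZl A (x y : A) a : hip (a *: x) y = a^* * hip x y.
Proof. by rewrite hip_conj hipZr rmorphM /= -hip_conj. Qed.

Lemma hip_castr A B (e : A = B) x y : hip x (castH e y) = hip (castH (esym e) x) y.
Proof. by case: B / e in x *. Qed.

Lemma castH0 A B (e : A = B) : castH e 0 = 0.
Proof. by case: B / e. Qed.

Lemma castHZ A B (e : A = B) k x : castH e (k *: x) = k *: castH e x.
Proof. by case: B / e. Qed.

Lemma castop_trans A B C (e1 : A = B) (e2 : B = C) f :
  castop e2 (castop e1 f) =1 castop (etrans e1 e2) f.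
Proof. by case: C / e2; case: B / e1. Qed.

Lemma castopZ A B (e : A = B) k (f : A -> A) :
  castop e (fun v => k *: f v) =1 (fun v => k *: castop e f v).
Proof. by move=> v; rewrite /castop castHZ. Qed.

Lemma castop_family (I : Type) (H : I -> hilbert R) (f : forall i, H i -> H i)
    u v w (e : v = w) (p : H v = H u) (q : H w = H u) :
  castop p (f v) =1 castop q (f w).
Proof. by case: w / e in q *; rewrite (proof_irrelevance _ p q). Qed.

Definition psd_bop A (f : A -> A) := is_bop f /\ is_psd f.

Lemma psd_bop0 A : psd_bop (fun _ : A => 0).
Proof.
split; last by move=> x; rewrite hip0r.
split=> [*|]; first by rewrite scaler0 addr0.
by exists 0 => x; rewrite hip0r normr0 mul0r.
Qed.

Lemma psd_bopZ A k (f : A -> A) :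
  0 <= k -> psd_bop f -> psd_bop (fun v => k *: f v).
Proof.
move=> k_ge0 [[f_lin [M f_bnd]] f_psd]; split; first split.
- by move=> b x y; rewrite f_lin scalerDr !scalerA mulrC.
- exists (`|k| * `|k| * M) => x.
  rewrite hipZl hipZr !normrM norm_conjC -!mulrA.
  by do 2!apply: ler_wpM2l => //.
- by move=> x; rewrite hipZr mulr_ge0.
Qed.

Lemma psd_bop_castop A B (e : A = B) (f : A -> A) : psd_bop f -> psd_bop (castop e f).
Proof. by case: B / e. Qed.

End HilbertOperators.

Section FreeAction.
Variables (aT : finGroupType) (T : finType) (to : {action aT &-> T}).

Definition orbit_rep x := odflt x [pick y in orbit to [set: aT] x].

Lemma orbit_repJ x g : orbit_rep (to x g) = orbit_rep x.
Proof.
rewrite /orbit_rep (@orbit_act _ _ to [set: aT]%G g x) ?inE //.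
by case: pickP => // /(_ x); rewrite orbit_refl.
Qed.

Lemma orbit_rep_orbit x : exists g, to (orbit_rep x) g = x.
Proof.
rewrite /orbit_rep; case: pickP => [y|/(_ x)]; last by rewrite orbit_refl.
by rewrite orbit_sym => /orbitP[g _ <-]; exists g.
Qed.

Definition orbit_coord x : aT := odflt 1%g [pick g | to (orbit_rep x) g == x].

Lemma orbit_coordP x : to (orbit_rep x) (orbit_coord x) = x.
Proof.
rewrite /orbit_coord; case: pickP => [g /eqP //|no_g].
by have [g rep_g] := orbit_rep_orbit x; have := no_g g; rewrite rep_g eqxx.
Qed.

Hypothesis to_free : forall g x, to x g = x -> g = 1%g.

Lemma act_free_inj x : injective (to x).
Proof.
move=> g h to_gh; apply/eqP; rewrite eq_mulgV1; apply/eqP/(to_free (x := x)).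
by rewrite actM to_gh actK.
Qed.

Lemma orbit_coordJ x g : orbit_coord (to x g) = (orbit_coord x * g)%g.
Proof.
apply: (@act_free_inj (orbit_rep x)).
by rewrite -{1}(orbit_repJ x g) orbit_coordP actM orbit_coordP.
Qed.

End FreeAction.

Section Facets.
Variables (n : nat) (Om : {set 'I_n.+1} -> nat).

Lemma facet_weight_gt0 F : facet Om F -> (0 < Om F)%N.
Proof. by case/andP; rewrite lt0n. Qed.

Definition facet_copy F (F_facet : facet Om F) : Ftil Om :=
  exist _ (Tagged (fun F => 'I_(Om F)) (Ordinal (facet_weight_gt0 F_facet))) F_facet.

Lemma restrE D (al : {ffun Ftil Om -> 'I_D}) i (y : Ftil_at Om i) :
  restr al i y = al (val y).
Proof. exact: ffunE. Qed.

Lemma restr_eq_val D (al be : {ffun Ftil Om -> 'I_D}) i (y : Ftil_at Om i) :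
  restr al i = restr be i -> al (val y) = be (val y).
Proof. by move/ffunP/(_ y); rewrite !restrE. Qed.

Hypothesis Om_wsc : is_wsc Om.

Lemma exists_facet_mem i : exists2 F, facet Om F & i \in F.
Proof.
have i_simplex : simplex Om [set i] && (i \in [set i]) by rewrite /simplex Om_wsc.2 set11.
have [S /andP[S_simplex iS] S_max] :=
  @arg_maxnP _ [set i] (fun S => simplex Om S && (i \in S)) (fun S => #|S|) i_simplex.
exists S => //; rewrite /facet S_simplex; apply/forallP => U; apply/implyP => SU.
apply/negP => U_simplex; have := S_max U; rewrite U_simplex (subsetP (proper_sub SU)) //.
by move/(_ isT); rewrite /= leqNgt proper_card.
Qed.

Lemma facet_neq0 F : facet Om F -> F != set0.
Proof.
case/andP => _ /forallP F_max; apply/negP => /eqP F0.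
have := F_max [set ord0]; rewrite F0 proper0 /simplex Om_wsc.2 /=.
by apply/negP/negPn/set0Pn; exists ord0; rewrite set11.
Qed.

Lemma Ftil_at_inhabited i : inhabited (Ftil_at Om i).
Proof.
have [F F_facet iF] := exists_facet_mem i.
exact: inhabits (Sub (facet_copy F_facet) iF).
Qed.

End Facets.

Section Gluing.
Variables (n D : nat) (Om : {set 'I_n.+1} -> nat) (P : finType).
Variable label : P -> {ffun Ftil Om -> 'I_D}.
Hypotheses (Om_wsc : is_wsc Om) (Om_conn : wsc_connected Om).
Hypothesis label_inj_pt : forall p q x, label p x = label q x -> p = q.

Lemma restr_label_inj i : injective (fun p => restr (label p) i).
Proof.
have [y] := Ftil_at_inhabited Om_wsc i.
by move=> p q /(restr_eq_val y)/label_inj_pt.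
Qed.

Lemma label_inj : injective label.
Proof. by move=> p q pq; apply: (@restr_label_inj ord0); rewrite /= pq. Qed.

Lemma restr_glue al :
  (forall i, exists p, restr al i = restr (label p) i) -> exists p, al = label p.
Proof.
case/fin_all_exists => p al_p.
have p_adj i j : wsc_adj Om i j -> p i = p j.
  case/existsP => F /and3P[F_facet iF jF]; pose x := facet_copy F_facet.
  apply: (label_inj_pt (x := x)).
  by rewrite -(restr_eq_val (Sub x iF) (al_p i)) (restr_eq_val (Sub x jF) (al_p j)).
have p_const i : p i = p ord0.
  have p_closed : closed (wsc_adj Om) [pred k | p k == p ord0].
    by move=> u v /p_adj; rewrite !inE => ->.
  by have := closed_connect p_closed (Om_conn ord0 i); rewrite !inE eqxx => /esym/eqP.
exists (p ord0); apply/ffunP => x.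
have /set0Pn[i ix] := facet_neq0 Om_wsc (valP x).
by rewrite -(p_const i) -(restr_eq_val (Sub x ix) (al_p i)).
Qed.

Lemma big_restr (V : comPzSemiRingType) (F : forall i, {ffun Ftil_at Om i -> 'I_D} -> V) :
  (forall i be, (forall p, be != restr (label p) i) -> F i be = 0) ->
  \sum_(al : {ffun Ftil Om -> 'I_D}) \prod_(i < n.+1) F i (restr al i) =
  \sum_(p : P) \prod_(i < n.+1) F i (restr (label p) i).
Proof.
move=> F0; rewrite (bigID [in label @: setT]) /= [X in _ + X]big1 ?addr0.
  rewrite big_imset /=; last by move=> p q _ _; apply: label_inj.
  by apply: eq_bigl => p; rewrite in_setT.
move=> al al_out.
case: (pickP (fun i => [forall p, restr al i != restr (label p) i])) =>
  [i /forallP al_i | al_glued].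
  by rewrite (bigD1 i) //= F0 ?mul0r.
have [|p al_p] := @restr_glue al.
  by move=> i; have /negbT/forallPn[p /negPn/eqP] := al_glued i; exists p.
by rewrite al_p imset_f ?in_setT in al_out.
Qed.

End Gluing.

Section Construction.
Variables (R : realType) (gT : finGroupType) (n : nat) (Om : {set 'I_n.+1} -> nat).
Variables (to : {action gT &-> 'I_n.+1}) (toF : {action gT &-> Ftil Om}).
Variables (H : 'I_n.+1 -> hilbert R) (HG : forall g i, H (to i g) = H i).
Variables (r : nat) (a : 'I_r -> forall i, H i -> H i).
Arguments a : clear implicits.
Hypotheses (Om_wsc : is_wsc Om) (Om_conn : wsc_connected Om).
Hypothesis toF_free : forall g x, toF x g = x -> g = 1%g.
Hypothesis collapseJ : forall g x, collapse (toF x g) = [set to i g | i in collapse x].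
Hypothesis a_psd : forall j (i : 'I_n.+1), psd_bop (a j i).

Lemma mem_collapseJ i g x : (to i g \in collapse (toF x g)) = (i \in collapse x).
Proof. by rewrite collapseJ (mem_imset (f := to^~ g)) //; exact: act_inj. Qed.

Definition is_translate D i g (b : {ffun Ftil_at Om i -> 'I_D})
    (b' : {ffun Ftil_at Om (to i g) -> 'I_D}) :=
  forall x y, val y = toF (val x) g -> b' y = b x.

Definition label_size := #|{: 'I_r * gT}|.

Definition label (p : 'I_r * gT) : {ffun Ftil Om -> 'I_label_size} :=
  [ffun x => enum_rank (p.1, p.2 * (orbit_coord toF x)^-1)%g].

Lemma label_inj_pt p q x : label p x = label q x -> p = q.
Proof.
rewrite !ffunE => /enum_rank_inj [] p1q1 /mulIg p2q2.
by case: p q p1q1 p2q2 => [? ?] [? ?] /= -> ->.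
Qed.

Lemma labelJ p x g : label p (toF x g) = label (p.1, p.2 * g^-1)%g x.
Proof. by rewrite !ffunE (orbit_coordJ toF_free) invMg mulgA. Qed.

Lemma is_translate_restr_label i g b b' j k : is_translate b b' ->
  b = restr (label (j, k)) i <-> b' = restr (label (j, k * g)%g) (to i g).
Proof.
move=> bb'; split=> [b_jk | b'_jkg].
  apply/ffunP => y; have ix : i \in collapse (toF (val y) g^-1)%g.
    by rewrite -(mem_collapseJ _ g) actKV; exact: valP y.
  by rewrite (bb' (Sub (toF (val y) g^-1)%g ix) y) ?actKV // b_jk !restrE /= labelJ invgK.
apply/ffunP => x; have ix : to i g \in collapse (toF (val x) g).
  by rewrite mem_collapseJ; exact: valP x.
by rewrite -(bb' x (Sub (toF (val x) g) ix)) // b'_jkg !restrE /= labelJ mulgK.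
Qed.

Definition norm_const : R[i] := n.+1.-root (#|gT|%:R^-1).

Lemma norm_const_ge0 : 0 <= norm_const.
Proof. by rewrite rootC_ge0 // invr_ge0 ler0n. Qed.

Lemma norm_constX : norm_const ^+ n.+1 = #|gT|%:R^-1.
Proof. exact: rootCK. Qed.

Definition term_op i (p : 'I_r * gT) : H i -> H i :=
  castop (HG p.2^-1 i) (a p.1 (to i p.2^-1))%g.
Arguments term_op : clear implicits.

Definition local_op i (b : {ffun Ftil_at Om i -> 'I_label_size}) : H i -> H i :=
  if [pick p | b == restr (label p) i] is Some p
  then fun v => norm_const *: term_op i p v else fun _ => 0.
Arguments local_op : clear implicits.

Lemma local_op_label i p :
  local_op i (restr (label p) i) = fun v => norm_const *: term_op i p v.
Proof.
rewrite /local_op; case: pickP => [q /eqP/(restr_label_inj Om_wsc label_inj_pt) -> //|].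
by move/(_ p); rewrite eqxx.
Qed.

Lemma local_op_nolabel i b : (forall p, b != restr (label p) i) -> local_op i b = fun _ => 0.
Proof.
rewrite /local_op => b_nolabel; case: pickP => // p /eqP b_p.
by have := b_nolabel p; rewrite b_p eqxx.
Qed.

Lemma local_op_psd_bop i b : psd_bop (local_op i b).
Proof.
rewrite /local_op; case: pickP => [p _ | _]; last exact: psd_bop0.
by apply: psd_bopZ; [exact: norm_const_ge0 | exact/psd_bop_castop/a_psd].
Qed.

Lemma term_opJ i g j k :
  castop (HG g i) (term_op (to i g) (j, k * g)%g) =1 term_op i (j, k).
Proof.
move=> v; rewrite castop_trans; apply: castop_family.
by rewrite -actM invMg mulgA mulgV mul1g.
Qed.

Lemma local_opJ i g b b' :
  is_translate b b' -> castop (HG g i) (local_op (to i g) b') =1 local_op i b.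
Proof.
move=> bb'; case: (pickP (fun p => b == restr (label p) i)) => [[j k] /eqP b_p | b_nolabel].
  rewrite b_p ((is_translate_restr_label _ _ bb').1 b_p) !local_op_label => v.
  by rewrite castopZ term_opJ.
have b'_nolabel p : b' != restr (label p) (to i g).
  case: p => j k; apply/eqP; rewrite -[k](mulgKV g).
  by move/(is_translate_restr_label _ _ bb').2/eqP; rewrite b_nolabel.
rewrite (local_op_nolabel (fun p => negbT (b_nolabel p))) (local_op_nolabel b'_nolabel).
by move=> v; rewrite /castop castH0.
Qed.

Definition act_vec k (x : forall i, H i) : forall i, H i :=
  fun i => castH (HG k i) (x (to i k)).

Lemma prod_term_op j k x y :
  \prod_(i < n.+1) hip (x i) (term_op i (j, k) (y i)) =
  elem_tensor (a j) (act_vec k x) (act_vec k y).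
Proof.
rewrite /elem_tensor (reindex_inj (act_inj to k)) /=; apply: eq_bigr => u _.
rewrite /term_op /= (castop_family _ (actK to k u) _ (esym (HG k u))).
by rewrite /castop hip_castr esymK.
Qed.

Lemma prod_local_op_label p x y :
  \prod_(i < n.+1) hip (x i) (local_op i (restr (label p) i) (y i)) =
  norm_const ^+ n.+1 * \prod_(i < n.+1) hip (x i) (term_op i p (y i)).
Proof.
under eq_bigr => i _ do rewrite local_op_label hipZr.
by rewrite big_split prodr_const card_ord.
Qed.

Variable sigma : (forall i, H i) -> (forall i, H i) -> R[i].
Hypothesis sigma_sep : forall x y, sigma x y = \sum_(j < r) elem_tensor (a j) x y.
Hypothesis sigma_inv : forall g x y, sigma (act_vec g x) (act_vec g y) = sigma x y.

Lemma sigma_average x y : sigma x y = norm_const ^+ n.+1 *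
  \sum_(k : gT) \sum_(j < r) \prod_(i < n.+1) hip (x i) (term_op i (j, k) (y i)).
Proof.
under eq_bigr => k _ do under eq_bigr => j _ do rewrite prod_term_op.
under eq_bigr => k _ do rewrite -sigma_sep sigma_inv.
rewrite sumr_const norm_constX -[sigma x y *+ _]mulr_natl mulKf // pnatr_eq0 -lt0n.
by apply/card_gt0P; exists 1%g.
Qed.

Lemma local_op_decomp x y : sigma x y =
  \sum_(al : {ffun Ftil Om -> 'I_label_size}) elem_tensor (fun i => local_op i (restr al i)) x y.
Proof.
rewrite /elem_tensor (big_restr Om_wsc Om_conn label_inj_pt
  (F := fun i b => hip (x i) (local_op i b (y i)))); last first.
  by move=> i b /local_op_nolabel ->; rewrite hip0r.
under [RHS]eq_bigr => p _ do rewrite prod_local_op_label.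
rewrite sigma_average -big_distrr /= exchange_big pair_big /=.
by congr (_ * _); apply: eq_bigr => -[j k].
Qed.

End Construction.

Theorem theorem3p14
  (R : realType) (gT : finGroupType) (n : nat)
  (Om : {set 'I_n.+1} -> nat)
  (to : {action gT &-> 'I_n.+1})
  (toF : {action gT &-> Ftil Om})
  (H : 'I_n.+1 -> hilbert R)
  (HG : forall (g : gT) (i : 'I_n.+1), H (to i g) = H i)
  (sigma : (forall i, H i) -> (forall i, H i) -> R[i]) :
  (* Om is a connected weighted simplicial complex *)
  is_wsc Om -> wsc_connected Om ->
  (* (to, toF) is a group action of gT on Om *)
  (forall (g : gT) (S : {set 'I_n.+1}), Om [set to i g | i in S] = Om S) ->
  (forall (g : gT) (x : Ftil Om),
      collapse (toF x g) = [set to i g | i in collapse x]) ->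
  (* the action is free *)
  (forall (g : gT) (x : Ftil Om), toF x g = x -> g = 1%g) ->
  (* sigma is separable *)
  (exists (r : nat) (a : 'I_r -> forall i, H i -> H i),
      (forall j i, is_bop (a j i) /\ is_psd (a j i)) /\
      forall x y, sigma x y = \sum_(j < r) elem_tensor (a j) x y) ->
  (* sigma is G-invariant *)
  (forall (g : gT) x y,
      sigma (fun i => castH (HG g i) (x (to i g)))
            (fun i => castH (HG g i) (y (to i g))) = sigma x y) ->
  (* sep-rank_(Om,G)(sigma) < oo : a separable (Om,G)-decomposition exists *)
  exists (D : nat) (s : forall i : 'I_n.+1, {ffun Ftil_at Om i -> 'I_D} -> H i -> H i),
    [/\ forall i beta, is_bop (s i beta) /\ is_psd (s i beta),
        forall x y, sigma x y =
          \sum_(al : {ffun Ftil Om -> 'I_D})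
             elem_tensor (fun i => s i (restr al i)) x y
      & forall (i : 'I_n.+1) (g : gT)
               (beta : {ffun Ftil_at Om i -> 'I_D})
               (beta' : {ffun Ftil_at Om (to i g) -> 'I_D}),
          (forall (x : Ftil_at Om i) (y : Ftil_at Om (to i g)),
              val y = toF (val x) g -> beta' y = beta x) ->
          castop (HG g i) (s (to i g) beta') =1 s i beta].
Proof.
move=> Om_wsc Om_conn _ collapseJ toF_free [r [a [a_psd sigma_sep]]] sigma_inv.
exists (label_size gT r), (local_op toF HG a); split.
- exact: local_op_psd_bop.
- exact: local_op_decomp.
- exact: local_opJ.
Qed.
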